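(* Let $p$ be a prime and let $(\mathbb{K},|\cdot|_{\mathbb{K}})$ be a valued field with $\mathbb{Q}_p\subseteq\mathbb{K}$ such that the inclusion $\mathbb{Q}_p\hookrightarrow\mathbb{K}$ is continuous. Let $f:\mathbb{Q}_p\to\mathbb{K}$ be continuous and $n\ge 0$. Then $\Delta_h^{n+1}f(x)=0$ for all $x,h\in\mathbb{Q}_p$ if and only if there are constants $a_0,\dots,a_n\in\mathbb{K}$ with $f(x)=a_0+a_1x+\cdots+a_nx^n$ for all $x\in\mathbb{Q}_p$.
   Context: $\mathbb{Q}_p$ is the field of $p$-adic numbers with its usual $p$-adic absolute value topology. $\Delta_h^{m}f(x)=\sum_{k=0}^{m}\binom{m}{k}(-1)^{m-k}f(x+kh)$. *)

From Stdlib Require Import Reals.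
From HB Require Import structures.
From mathcomp Require Import all_boot all_order all_algebra.
Set Implicit Arguments. Unset Strict Implicit. Unset Printing Implicit Defensive.
Import Order.TTheory GRing.Theory Num.Theory.
Local Open Scope ring_scope.

Definition is_absval (F : fieldType) (v : F -> R) : Prop :=
  (forall x, Rle R0 (v x)) /\
  (forall x, v x = R0 <-> x = 0) /\
  (forall x y, v (x * y) = Rmult (v x) (v y)) /\
  (forall x y, Rle (v (x + y)) (Rplus (v x) (v y))).

Definition av_continuous (F1 F2 : fieldType) (v1 : F1 -> R) (v2 : F2 -> R)
  (g : F1 -> F2) : Prop :=
  forall x (eps : R), Rlt R0 eps -> exists delta : R, Rlt R0 delta /\
    forall y, Rlt (v1 (y - x)) delta -> Rlt (v2 (g y - g x)) eps.

(* The p-adic absolute value on Q: |q|_p = p^(-v_p(q)), |0|_p = 0. *)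
Definition padic_abs (p : nat) (q : rat) : R :=
  if q == 0 then R0
  else powerRZ (INR p)
    (Z.opp (Z.sub (Z.of_nat (logn p `|numq q|%N))
                  (Z.of_nat (logn p `|denq q|%N)))).

(* (Qp, vp) is a model of the field of p-adic numbers with its p-adic
   absolute value: a field with an absolute value which extends the p-adic
   absolute value on Q (via the canonical map ratr : rat -> Qp), in which Q
   is dense, and which is complete.  This characterizes Q_p up to unique
   isometric isomorphism (Q_p is the completion of (Q, |.|_p)). *)
Definition is_Qp (p : nat) (Qp : fieldType) (vp : Qp -> R) : Prop :=
  is_absval vp /\
  (forall q : rat, vp (ratr q) = padic_abs p q) /\
  (forall (x : Qp) (eps : R), Rlt R0 eps ->
     exists q : rat, Rlt (vp (x - ratr q)) eps) /\
  (forall u : nat -> Qp,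
     (forall eps : R, Rlt R0 eps -> exists N : nat,
        forall m k : nat, (N <= m)%N -> (N <= k)%N -> Rlt (vp (u m - u k)) eps) ->
     exists l : Qp, forall eps : R, Rlt R0 eps -> exists N : nat,
        forall m : nat, (N <= m)%N -> Rlt (vp (u m - l)) eps).

Definition fdiff (A : zmodType) (B : ringType) (m : nat) (h : A) (f : A -> B)
  (x : A) : B :=
  \sum_(k < m.+1) ('C(m, k)%:R * (-1) ^+ (m - k) * f (x + h *+ k)).

From Stdlib Require Import Reals Lra.
From HB Require Import structures.
From mathcomp Require Import all_boot all_order all_algebra.
From mathcomp Require Import zify ring.
Import GRing.Theory.
Local Open Scope ring_scope.

(* The direction "polynomial => Delta^(n+1) f = 0" is pure algebra: by the
   binomial theorem Delta_h lowers the degree of a polynomial, so Delta^(n+1)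
   kills every polynomial of degree <= n (fdiff_poly).

   For the converse, let P be the polynomial interpolating f at 0, 1, ..., n
   (Vandermonde matrices are invertible) and g := f - P o iota.  Then
   Delta^(n+1) g = 0 and g vanishes at 0, ..., n.  Along any arithmetic
   progression, Delta^(n+1) g = 0 is a linear recurrence whose solutions are
   determined by n + 1 consecutive values and are polynomial sequences
   (recurrence_poly).  Hence g vanishes on N, then on the points k / (M + 1)
   (a polynomial vanishing at (M + 1) j for j <= n is zero), hence, by
   reflection, on all of Q (vanish_rat).  As g is continuous and Q is dense
   in Q_p, g = 0 (dense_vanish).  Characteristic zero of Q_p, and hence of K,
   comes from the p-adic absolute value (Qp_char0). *)

Lemma fdiffS {A : zmodType} {B : nzRingType} m (h : A) (f : A -> B) x :
  fdiff m.+1 h f x = fdiff m h f (x + h) - fdiff m h f x.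
Proof.
rewrite /fdiff big_ord_recl /=.
have binS_lift (k : 'I_m.+1) : 'C(m.+1, lift ord0 k) = ('C(m, k.+1) + 'C(m, k))%N.
  by rewrite /= binS.
under eq_bigr do rewrite binS_lift natrD !mulrDl.
rewrite big_split /= [X in _ + X]addrC addrCA; congr (_ + _).
  by apply: eq_bigr => k _; rewrite /bump /= add1n subSS mulrS addrA.
rewrite big_ord_recr /= (bin_small (ltnSn m)) !mul0r addr0.
rewrite [in RHS]big_ord_recl /= opprD bin0 subn0 addr0 -sumrN.
congr (_ + _).
  by rewrite bin0 subn0 mulr0n addr0 exprS mulN1r !mul1r mulNr.
apply: eq_bigr => k _; rewrite /bump /= add1n subSS.
by rewrite -(subnSK (ltn_ord k)) exprS !mulN1r mulrN mulNr.
Qed.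

Lemma fdiff_ext {A : zmodType} {B : nzRingType} {m} {h : A} {f g : A -> B} {x} :
  f =1 g -> fdiff m h f x = fdiff m h g x.
Proof. by move=> fg; apply: eq_bigr => k _; rewrite fg. Qed.

Lemma fdiff_shift {A : zmodType} {B : nzRingType} m (h : A) (f : A -> B) x :
  fdiff m h f (x + h) = fdiff m h (fun y => f (y + h)) x.
Proof. by apply: eq_bigr => k _; rewrite addrAC. Qed.

Lemma fdiff_sub {A : zmodType} {B : nzRingType} m (h : A) (f g : A -> B) x :
  fdiff m h (fun y => f y - g y) x = fdiff m h f x - fdiff m h g x.
Proof. by rewrite /fdiff -sumrB; apply: eq_bigr => k _; rewrite mulrBr. Qed.

Lemma fdiff_lin {A : zmodType} {B : comNzRingType} m (h : A) L (c : 'I_L -> B)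
    (f : 'I_L -> A -> B) x :
  fdiff m h (fun y => \sum_(l < L) c l * f l y) x
  = \sum_(l < L) c l * fdiff m h (f l) x.
Proof.
rewrite /fdiff; under eq_bigr do rewrite mulr_sumr.
rewrite exchange_big; apply: eq_bigr => l _; rewrite mulr_sumr.
by apply: eq_bigr => k _; rewrite mulrCA.
Qed.

(* Delta^m kills every monomial y^i with i < m: by the binomial theorem,
   Delta_h y^i is a combination of lower powers, so induct on m. *)
Lemma fdiff_pow {R : comNzRingType} m i (a h : R) :
  (i < m)%N -> fdiff m h (fun y => y ^+ i) a = 0.
Proof.
elim: m i a => [//|m IH] i a lt_im.
rewrite fdiffS fdiff_shift -fdiff_sub.
have lower_powers y :
    (y + h) ^+ i - y ^+ i = \sum_(l < i) (h ^+ (i - l) *+ 'C(i, l)) * y ^+ l.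
  rewrite [y + h]addrC exprDn big_ord_recr /= subnn expr0 mul1r binn.
  by rewrite mulr1n addrK; apply: eq_bigr => l _; rewrite mulrnAl.
rewrite (fdiff_ext lower_powers) fdiff_lin big1 // => l _.
by rewrite IH ?mulr0 // (leq_trans (ltn_ord l)).
Qed.

Lemma fdiff_poly {R : comNzRingType} {n} (c : 'I_n.+1 -> R) (a h : R) :
  fdiff n.+1 h (fun y => \sum_(i < n.+1) c i * y ^+ i) a = 0.
Proof. by rewrite fdiff_lin big1 // => i _; rewrite fdiff_pow ?mulr0. Qed.

Definition seq_fdiff {B : nzRingType} m (u : nat -> B) (k : nat) : B :=
  \sum_(j < m.+1) 'C(m, j)%:R * (-1) ^+ (m - j) * u (k + j)%N.

Lemma fdiff_progression {A : zmodType} {B : nzRingType} m (h : A) (f : A -> B) x0 k :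
  fdiff m h f (x0 + h *+ k) = seq_fdiff m (fun j => f (x0 + h *+ j)) k.
Proof. by apply: eq_bigr => j _; rewrite mulrnDr addrA. Qed.

Lemma seq_fdiff_sub {B : nzRingType} m (u v : nat -> B) k :
  seq_fdiff m (fun j => u j - v j) k = seq_fdiff m u k - seq_fdiff m v k.
Proof. by rewrite /seq_fdiff -sumrB; apply: eq_bigr => j _; rewrite mulrBr. Qed.

(* A solution of the recurrence seq_fdiff m u = 0 is determined by its first
   m terms, since the coefficient of u (k + m) is 1. *)
Lemma seq_fdiff_eq0 (B : nzRingType) m (u : nat -> B) :
  (forall k, seq_fdiff m u k = 0) -> (forall k, (k < m)%N -> u k = 0) ->
  forall k, u k = 0.
Proof.
move=> rec u_init k; elim/ltn_ind: k => k IH.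
case: (ltnP k m) => [/u_init //|le_mk].
have := rec (k - m)%N; rewrite /seq_fdiff big_ord_recr /= big1.
  by rewrite add0r binn subnn expr0 mulr1 mul1r subnK.
move=> j _; rewrite IH ?mulr0 //; have := ltn_ord j; lia.
Qed.

Lemma progression_eq0 {A : zmodType} {B : nzRingType} {m} (h : A) {f : A -> B} x0 :
  (forall x, fdiff m h f x = 0) ->
  (forall k, (k < m)%N -> f (x0 + h *+ k) = 0) ->
  forall k, f (x0 + h *+ k) = 0.
Proof.
move=> f_diff f_init; apply: (@seq_fdiff_eq0 _ m) => // k.
by rewrite -fdiff_progression.
Qed.

Lemma vandermonde_unit {F : fieldType} {m} {x : 'I_m -> F} :
  injective x -> Vandermonde m (\row_j x j) \in unitmx.
Proof.
move=> x_inj; rewrite unitmxE det_Vandermonde unitfE.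
apply/prodf_neq0 => i _; apply/prodf_neq0 => j lt_ij; rewrite !mxE subr_eq0.
by apply/eqP => /x_inj eq_ji; rewrite eq_ji ltnn in lt_ij.
Qed.

Lemma vandermonde_row {F : fieldType} {m} (x c : 'I_m -> F) j :
  ((\row_i c i) *m Vandermonde m (\row_j x j)) 0 j = \sum_(i < m) c i * x j ^+ i.
Proof. by rewrite !mxE; apply: eq_bigr => i _; rewrite !mxE. Qed.

Lemma interpolation {F : fieldType} {m} {x : 'I_m -> F} (y : 'I_m -> F) :
  injective x ->
  exists c : 'I_m -> F, forall j, \sum_(i < m) c i * x j ^+ i = y j.
Proof.
move=> x_inj; pose C := (\row_j y j) *m invmx (Vandermonde m (\row_j x j)).
exists (fun i => C 0 i) => j; rewrite -vandermonde_row.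
have -> : \row_i C 0 i = C by apply/rowP => i; rewrite mxE.
by rewrite /C -mulmxA mulVmx ?(vandermonde_unit x_inj) // mulmx1 mxE.
Qed.

Lemma interpolation_unique {F : fieldType} {m} {x : 'I_m -> F} (c : 'I_m -> F) :
  injective x ->
  (forall j, \sum_(i < m) c i * x j ^+ i = 0) -> forall i, c i = 0.
Proof.
move=> x_inj c_roots i.
have cV0 : (\row_i c i) *m Vandermonde m (\row_j x j) = 0.
  by apply/rowP => j; rewrite vandermonde_row c_roots mxE.
have : \row_i c i = 0 :> 'rV_m.
  by rewrite -(mulmxK (vandermonde_unit x_inj) (\row_i c i)) cV0 mul0mx.
by move/rowP/(_ i); rewrite !mxE.
Qed.

Lemma natr_inj_pchar0 {F : fieldType} :
  [pchar F] =i pred0 -> injective (fun n : nat => n%:R : F).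
Proof.
move/pcharf0P => F0.
have le_inj i j : (i <= j)%N -> i%:R = j%:R :> F -> i = j.
  move=> le_ij /eqP; rewrite eq_sym -subr_eq0 -natrB // F0 subn_eq0 => le_ji.
  by apply/eqP; rewrite eqn_leq le_ij.
move=> i j eq_ij; case: (leqP i j) => [|/ltnW] le; first exact: le_inj.
by symmetry; apply: le_inj.
Qed.

Lemma nat_nodes_inj {K : fieldType} n :
  [pchar K] =i pred0 -> injective (fun j : 'I_n.+1 => (j : nat)%:R : K).
Proof. by move=> K0 i j /(natr_inj_pchar0 K0) /val_inj. Qed.

Section CharacteristicZero.
Variables (Qp K : fieldType).
Hypotheses (Qp0 : [pchar Qp] =i pred0) (K0 : [pchar K] =i pred0).

Lemma seq_fdiff_poly n (c : 'I_n.+1 -> K) k :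
  seq_fdiff n.+1 (fun j => \sum_(i < n.+1) c i * j%:R ^+ i) k = 0.
Proof.
rewrite -[RHS](fdiff_poly c k%:R 1).
by apply: eq_bigr => j _; rewrite natrD.
Qed.

(* Conversely, every solution of the recurrence of order n + 1 is the
   sequence of values of a polynomial of degree at most n: interpolate the
   first n + 1 terms and compare the two solutions. *)
Lemma recurrence_poly n (u : nat -> K) :
  (forall k, seq_fdiff n.+1 u k = 0) ->
  exists c : 'I_n.+1 -> K, forall k, u k = \sum_(i < n.+1) c i * k%:R ^+ i.
Proof.
move=> u_rec.
have [c c_interp] := interpolation (fun j : 'I_n.+1 => u j) (nat_nodes_inj n K0).
exists c => k; apply/eqP; rewrite -subr_eq0; apply/eqP; move: k.
apply: (@seq_fdiff_eq0 _ n.+1) => [k|k lt_kn].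
  by rewrite seq_fdiff_sub u_rec seq_fdiff_poly subrr.
by rewrite -(c_interp (Ordinal lt_kn)) subrr.
Qed.

Section VanishingDifferences.
Variables (n : nat) (phi : Qp -> K).
Hypothesis phi_diff : forall x h, fdiff n.+1 h phi x = 0.
Hypothesis phi_init : forall j, (j < n.+1)%N -> phi j%:R = 0.

Lemma vanish_nat k : phi k%:R = 0.
Proof.
have := progression_eq0 1 0 (phi_diff ^~ 1) _ k; rewrite add0r; apply.
by move=> j lt_jn; rewrite add0r phi_init.
Qed.

(* phi also vanishes at the points k / (M + 1): along the progression of
   step 1 / (M + 1) it is a polynomial in k, which vanishes at the n + 1
   distinct points (M + 1) j, hence is zero. *)
Lemma vanish_unit_fraction M k : phi ((M.+1%:R)^-1 *+ k) = 0.
Proof.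
set h := (M.+1%:R : Qp)^-1; pose u j := phi (h *+ j).
have [c u_poly] : exists c : 'I_n.+1 -> K,
    forall k, u k = \sum_(i < n.+1) c i * k%:R ^+ i.
  apply: (@recurrence_poly n) => j; rewrite -[RHS](phi_diff (h *+ j) h).
  by apply: eq_bigr => i _; rewrite /u mulrnDr.
have M1_neq0 : M.+1%:R != 0 :> Qp by rewrite (pcharf0P Qp).1.
have hM : h *+ M.+1 = 1 by rewrite -mulr_natr mulVf.
have nodes_inj : injective (fun j : 'I_n.+1 => (M.+1 * j)%N%:R : K).
  move=> i j /(natr_inj_pchar0 K0) /eqP.
  by rewrite eqn_mul2l /= => /eqP /val_inj.
have c0 : forall i, c i = 0.
  apply: (interpolation_unique _ nodes_inj) => j.
  by rewrite -u_poly /u mulrnA hM; apply: vanish_nat.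
by rewrite -/(u k) u_poly big1 // => i _; rewrite c0 mul0r.
Qed.
End VanishingDifferences.

(* A function with vanishing (n+1)-th differences which vanishes at
   0, 1, ..., n vanishes on all of Q: apply the previous lemma to phi and to
   its reflection x |-> phi (- x). *)
Lemma vanish_rat n (phi : Qp -> K) :
  (forall x h, fdiff n.+1 h phi x = 0) ->
  (forall j, (j < n.+1)%N -> phi j%:R = 0) ->
  forall q : rat, phi (ratr q) = 0.
Proof.
move=> phi_diff phi_init.
have phi_neg j : phi (- j%:R) = 0.
  have := progression_eq0 (-1) n%:R (phi_diff ^~ (-1)) => /(_ _ (n + j)%N).
  rewrite mulNrn natrD opprD addrA subrr add0r; apply=> k lt_kn.
  rewrite mulNrn -natrB; last by rewrite -ltnS.
  by apply: phi_init; rewrite ltnS leq_subr.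
pose psi x := phi (- x).
have psi_diff x h : fdiff n.+1 h psi x = 0.
  rewrite -(phi_diff (- x) (- h)).
  by apply: eq_bigr => k _; rewrite /psi opprD mulNrn.
have psi_init j : (j < n.+1)%N -> psi j%:R = 0 by move=> _; apply: phi_neg.
move=> q; rewrite /ratr.
have := denq_gt0 q; move: (numq q) (denq q) => a [[|M]|d] //= _.
have frac_eq (k : nat) : (Posz k)%:~R / (Posz M.+1)%:~R = (M.+1%:R : Qp)^-1 *+ k.
  by rewrite mulrC mulr_natr.
case: a => a; first by rewrite frac_eq (vanish_unit_fraction _ _ phi_diff).
rewrite NegzE mulrNz mulNr frac_eq.
exact: (vanish_unit_fraction _ _ psi_diff psi_init).
Qed.
End CharacteristicZero.

Lemma absval_ge0 {F : fieldType} {v : F -> R} (hv : is_absval v) x : Rle R0 (v x).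
Proof. by case: hv. Qed.

Lemma absval_eq0 {F : fieldType} {v : F -> R} (hv : is_absval v) x :
  v x = R0 <-> x = 0.
Proof. by case: hv => _ []. Qed.

Lemma absvalM {F : fieldType} {v : F -> R} (hv : is_absval v) x y :
  v (x * y) = Rmult (v x) (v y).
Proof. by case: hv => _ [_ []]. Qed.

Lemma absvalD {F : fieldType} {v : F -> R} (hv : is_absval v) x y :
  Rle (v (x + y)) (Rplus (v x) (v y)).
Proof. by case: hv => _ [_ [_]]. Qed.

Lemma absval1 {F : fieldType} {v : F -> R} (hv : is_absval v) : v 1 = R1.
Proof.
have v1_neq0 : v 1 <> R0 by move/(absval_eq0 hv)/eqP; rewrite oner_eq0.
have := absvalM hv 1 1; rewrite mulr1 => v11.
by apply: (Rmult_eq_reg_l (v 1)) => //; rewrite Rmult_1_r.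
Qed.

Lemma absvalN {F : fieldType} {v : F -> R} (hv : is_absval v) x : v (- x) = v x.
Proof.
have vN1 : v (-1) = R1.
  have := absvalM hv (-1) (-1); rewrite mulrNN mulr1 absval1 //.
  have := absval_ge0 hv (-1); nra.
by rewrite -mulN1r absvalM // vN1 Rmult_1_l.
Qed.

Section ProductEstimate.
Local Open Scope R_scope.

(* The tolerance needed for continuity of products: if |a' - a| < e and
   |b' - b| < e then |a' b' - a b| <= |a'| |b' - b| + |a' - a| |b| < eps. *)
Lemma product_estimate {a b eps : R} : 0 <= a -> 0 <= b -> 0 < eps ->
  exists e, 0 < e /\ forall a' da db, 0 <= a' -> 0 <= da -> 0 <= db ->
    a' <= a + da -> da < e -> db < e -> a' * db + da * b < eps.
Proof.
move=> a_ge0 b_ge0 eps_gt0.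
have frac_gt0 : 0 < eps / (a + b + 1) by apply: Rdiv_lt_0_compat; lra.
set e := Rmin 1 (eps / (a + b + 1)).
have e_gt0 : 0 < e by apply: Rmin_pos; lra.
have e_le1 : e <= 1 by apply: Rmin_l.
have e_small : e * (a + b + 1) <= eps.
  apply: (Rle_trans _ (eps / (a + b + 1) * (a + b + 1))).
    by apply: Rmult_le_compat_r; [lra | apply: Rmin_r].
  by right; rewrite /Rdiv Rmult_assoc Rinv_l ?Rmult_1_r //; lra.
exists e; split => // a' da db a'_ge0 da_ge0 db_ge0 a'_le da_lt db_lt.
have : a' * db <= (a + 1) * db by apply: Rmult_le_compat_r; lra.
have : (a + 1) * db < (a + 1) * e by apply: Rmult_lt_compat_l; lra.
have : da * b <= e * b by apply: Rmult_le_compat_r; lra.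
nra.
Qed.
End ProductEstimate.

Definition av_continuous_at {F K : fieldType} (vF : F -> R) (vK : K -> R)
    (g : F -> K) (x : F) : Prop :=
  forall eps, Rlt R0 eps -> exists delta, Rlt R0 delta /\
    forall y, Rlt (vF (y - x)) delta -> Rlt (vK (g y - g x)) eps.

Lemma continuous_at_ext {F K : fieldType} {vF : F -> R} {vK : K -> R}
    (g1 g2 : F -> K) x :
  g1 =1 g2 -> av_continuous_at vF vK g1 x -> av_continuous_at vF vK g2 x.
Proof.
move=> g12 g1_cont eps eps_gt0; have [d [d_gt0 close]] := g1_cont _ eps_gt0.
by exists d; split => // y /close; rewrite -!g12.
Qed.

Lemma continuous_at_const {F K : fieldType} {vF : F -> R} {vK : K -> R}
    (hK : is_absval vK) c x : av_continuous_at vF vK (fun _ => c) x.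
Proof.
move=> eps eps_gt0; exists R1; split; first exact: Rlt_0_1.
by move=> y _; rewrite subrr (proj2 (absval_eq0 hK 0)).
Qed.

Lemma continuous_at_add {F K : fieldType} {vF : F -> R} {vK : K -> R}
    (hK : is_absval vK) g1 g2 x :
  av_continuous_at vF vK g1 x -> av_continuous_at vF vK g2 x ->
  av_continuous_at vF vK (fun y => g1 y + g2 y) x.
Proof.
move=> c1 c2 eps eps_gt0.
have eps2_gt0 : Rlt R0 (Rdiv eps 2) by lra.
have [d1 [d1_gt0 close1]] := c1 _ eps2_gt0.
have [d2 [d2_gt0 close2]] := c2 _ eps2_gt0.
exists (Rmin d1 d2); split; first exact: Rmin_pos.
move=> y y_close; have := close1 y (Rlt_le_trans _ _ _ y_close (Rmin_l _ _)).
have := close2 y (Rlt_le_trans _ _ _ y_close (Rmin_r _ _)).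
have -> : g1 y + g2 y - (g1 x + g2 x) = (g1 y - g1 x) + (g2 y - g2 x) by ring.
have := absvalD hK (g1 y - g1 x) (g2 y - g2 x); lra.
Qed.

Lemma continuous_at_opp {F K : fieldType} {vF : F -> R} {vK : K -> R}
    (hK : is_absval vK) g x : av_continuous_at vF vK g x ->
  av_continuous_at vF vK (fun y => - g y) x.
Proof.
move=> g_cont eps eps_gt0; have [d [d_gt0 close]] := g_cont _ eps_gt0.
by exists d; split => // y /close; rewrite -opprD (absvalN hK).
Qed.

Lemma continuous_at_mul {F K : fieldType} {vF : F -> R} {vK : K -> R}
    (hK : is_absval vK) g1 g2 x :
  av_continuous_at vF vK g1 x -> av_continuous_at vF vK g2 x ->
  av_continuous_at vF vK (fun y => g1 y * g2 y) x.
Proof.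
move=> c1 c2 eps eps_gt0.
have [e [e_gt0 estimate]] :=
  product_estimate (absval_ge0 hK (g1 x)) (absval_ge0 hK (g2 x)) eps_gt0.
have [d1 [d1_gt0 close1]] := c1 _ e_gt0; have [d2 [d2_gt0 close2]] := c2 _ e_gt0.
exists (Rmin d1 d2); split; first exact: Rmin_pos.
move=> y y_close.
have g1_close := close1 y (Rlt_le_trans _ _ _ y_close (Rmin_l _ _)).
have g2_close := close2 y (Rlt_le_trans _ _ _ y_close (Rmin_r _ _)).
have -> : g1 y * g2 y - g1 x * g2 x = g1 y * (g2 y - g2 x) + (g1 y - g1 x) * g2 x.
  by ring.
apply: Rle_lt_trans (absvalD hK _ _) _; rewrite !(absvalM hK).
apply: estimate g1_close g2_close; try exact: absval_ge0.
by have := absvalD hK (g1 x) (g1 y - g1 x); rewrite addrC subrK.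
Qed.

Lemma continuous_at_pow {F K : fieldType} {vF : F -> R} {vK : K -> R}
    (hK : is_absval vK) g i x : av_continuous_at vF vK g x ->
  av_continuous_at vF vK (fun y => g y ^+ i) x.
Proof.
move=> g_cont; elim: i => [|i IH]; first exact: (continuous_at_const hK).
apply: (continuous_at_ext (fun y => g y * g y ^+ i)) => [y|]; first by rewrite exprS.
exact: (continuous_at_mul hK).
Qed.

Lemma continuous_at_sum {F K : fieldType} {vF : F -> R} {vK : K -> R}
    (hK : is_absval vK) m (G : 'I_m -> F -> K) x :
  (forall i, av_continuous_at vF vK (G i) x) ->
  av_continuous_at vF vK (fun y => \sum_(i < m) G i y) x.
Proof.
elim: m G => [|m IH] G G_cont.
  by apply: (continuous_at_ext (fun _ => 0)) => [y|]; rewrite ?big_ord0 //;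
    apply: (continuous_at_const hK).
apply: (continuous_at_ext (fun y => \sum_(i < m) G (widen_ord (leqnSn m) i) y
  + G ord_max y)) => [y|]; first by rewrite big_ord_recr.
by apply: (continuous_at_add hK) => //; apply: (IH (fun i => G (widen_ord _ i))).
Qed.

Lemma continuous_at_poly {F K : fieldType} {vF : F -> R} {vK : K -> R}
    (hK : is_absval vK) m (a : 'I_m -> K) (g : F -> K) x :
  av_continuous_at vF vK g x ->
  av_continuous_at vF vK (fun y => \sum_(i < m) a i * g y ^+ i) x.
Proof.
move=> g_cont; apply: (continuous_at_sum hK) => i.
apply: (continuous_at_mul hK); first exact: (continuous_at_const hK).
exact: (continuous_at_pow hK).
Qed.

Lemma dense_vanish {F K : fieldType} {vF : F -> R} {vK : K -> R}
    (hvF : is_absval vF) (hK : is_absval vK) (g : F -> K) :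
  (forall x eps, Rlt R0 eps -> exists q : rat, Rlt (vF (x - ratr q)) eps) ->
  (forall x, av_continuous_at vF vK g x) -> (forall q : rat, g (ratr q) = 0) ->
  forall x, g x = 0.
Proof.
move=> dense g_cont g_rat x; case: (eqVneq (g x) 0) => // gx_neq0; exfalso.
have gx_gt0 : Rlt R0 (vK (g x)).
  case: (Rle_lt_or_eq_dec _ _ (absval_ge0 hK (g x))) => // /esym/(absval_eq0 hK).
  by move/eqP; rewrite (negbTE gx_neq0).
have [d [d_gt0 close]] := g_cont x _ gx_gt0.
have [q q_close] := dense x d d_gt0.
have := close (ratr q); rewrite g_rat sub0r (absvalN hK) -opprB (absvalN hvF).
by move=> /(_ q_close); apply: Rlt_irrefl.
Qed.

Lemma padic_abs_neq0 p q : (0 < p)%N -> q != 0 -> padic_abs p q <> R0.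
Proof.
move=> p_gt0 q_neq0; rewrite /padic_abs (negbTE q_neq0).
by apply: Rgt_not_eq; apply: powerRZ_lt; apply: lt_0_INR; apply/ltP.
Qed.

Lemma Qp_char0 {p} {Qp : fieldType} {vp : Qp -> R} :
  prime p -> is_Qp p vp -> [pchar Qp] =i pred0.
Proof.
move=> p_prime [hvp [vp_rat _]]; apply/pcharf0P => -[|k]; first by rewrite !eqxx.
rewrite -[RHS]/false; apply/negbTE/eqP => k_eq0; have := vp_rat k.+1%:R.
rewrite ratr_nat k_eq0 (proj2 (absval_eq0 hvp 0) erefl) => /esym.
by apply: padic_abs_neq0; rewrite ?prime_gt0 ?Num.Theory.pnatr_eq0.
Qed.

Theorem theorem6 (p : nat) (hp : prime p)
  (Qp : fieldType) (vp : Qp -> R) (hQp : is_Qp p vp)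
  (K : fieldType) (vK : K -> R) (hK : is_absval vK)
  (iota : {rmorphism Qp -> K}) (hiota : av_continuous vp vK iota)
  (f : Qp -> K) (hf : av_continuous vp vK f) (n : nat) :
  (forall x h : Qp, fdiff n.+1 h f x = 0) <->
  (exists a : 'I_n.+1 -> K,
     forall x : Qp, f x = \sum_(i < n.+1) a i * iota x ^+ i).
Proof.
have [hvp [_ [Q_dense _]]] := hQp.
have Qp0 := Qp_char0 hp hQp.
have K0 : [pchar K] =i pred0 by move=> k; rewrite (fmorph_pchar iota) Qp0.
pose P (a : 'I_n.+1 -> K) y := \sum_(i < n.+1) a i * iota y ^+ i.
have P_diff a x h : fdiff n.+1 h (P a) x = 0.
  rewrite -[RHS](fdiff_poly a (iota x) (iota h)).
  by apply: eq_bigr => k _; rewrite /P rmorphD rmorphMn.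
split => [f_diff | [a f_poly] x h]; last by rewrite (fdiff_ext f_poly); apply: P_diff.
have [a a_interp] := interpolation (fun j : 'I_n.+1 => f j%:R) (nat_nodes_inj n K0).
exists a; pose g x := f x - P a x.
have g_diff x h : fdiff n.+1 h g x = 0 by rewrite fdiff_sub f_diff P_diff subrr.
have g_init j : (j < n.+1)%N -> g j%:R = 0.
  by move=> lt_jn; rewrite /g /P rmorph_nat (a_interp (Ordinal lt_jn)) subrr.
have g_cont x : av_continuous_at vp vK g x.
  rewrite /g; apply: (continuous_at_add hK); first exact: hf.
  apply: (continuous_at_opp hK); rewrite /P.
  by apply: (continuous_at_poly hK); apply: hiota.
move=> x; apply/eqP; rewrite -subr_eq0 -/(g x); apply/eqP.
apply: (dense_vanish hvp hK g Q_dense g_cont).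
exact: (vanish_rat _ _ Qp0 K0 _ _ g_diff g_init).
Qed.
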